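(* Let $a,b,d<0$ and $c>0$ and let $\{W_n(z)\}_{n\ge0}$ be the normalised sequence defined below. Then \[ x_\Delta^-<x_A<0<x_B\qquad\text{and}\qquad x_A<x_\Delta^+<x_B, \] and $A(x_\Delta^-)>0>A(x_\Delta^+)$. For every $n\ge1$: $(-1)^{\lceil n/2\rceil}W_n(x_A)>0$, $(-1)^nW_n(x_B)<0$, and $W_n(x_\Delta^-)<0$. Furthermore: (i) If $c\le c^-$, then $x_\Delta^+\le x_g^-\le x_g^+<0$, $(-1)^nW_n(x_g^\pm)>0$ for $n\ge1$, and \[ (-1)^nW_n(x_\Delta^+)\begin{cases}<0,&\text{if }\Delta_\Delta>\Delta_g\text{ and }n>n^+,\\ =0,&\text{if }\Delta_\Delta>\Delta_g\text{ and }n=n^+,\\ >0,&\text{otherwise.}\end{cases} \] (ii) If $c\ge c^+$, then $x_B<x_g^-$, $W_n(x_g^\pm)>0$ for $n\ge1$, and $(-1)^nW_n(x_\Delta^+)<0$ for all $n\ge2$.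
   Context: Let $a,b,c,d\in\mathbb{R}$ with $ac\ne0$, and put $A(z)=az+b$, $B(z)=cz+d$. The normalised sequence $\{W_n(z)\}_{n\ge0}$ is defined by $W_0(z)=1$, $W_1(z)=z$ and $W_n(z)=A(z)W_{n-1}(z)+B(z)W_{n-2}(z)$ for $n\ge2$. Notation (for $a,b,d<0<c$): - $\Delta_\Delta=-a^2d+abc+c^2$ (which is $>0$) and $x_\Delta^\pm=\dfrac{-ab-2c\pm2\sqrt{\Delta_\Delta}}{a^2}$ (zeros of $A(z)^2+4B(z)$). - $g(z)=(1-a)z^2-(b+c)z-d$, $\Delta_g=(b+c)^2+4d(1-a)$, $x_g^\pm=\dfrac{b+c\pm\sqrt{\Delta_g}}{2(1-a)}$ (zeros of $g$, real iff $c\le c^-$ or $c\ge c^+$). - $c^\pm=\pm2\sqrt{d(a-1)}-b$. - $x_A=-b/a$, $x_B=-d/c$, $h(z)=(2-a)z-b$, $n^+=-A(x_\Delta^+)/h(x_\Delta^+)$ (defined when $h(x_\Delta^+)\neq0$, in particular when $\Delta_\Delta>\Delta_g$). *)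

From Stdlib Require Import Reals.
Open Scope R_scope.

(* Pair (W_n(z), W_{n+1}(z)) of the normalised sequence
   W_0 = 1, W_1 = z, W_n = (a z + b) W_{n-1} + (c z + d) W_{n-2}. *)
Fixpoint Wpair (a b c d : R) (n : nat) (z : R) : R * R :=
  match n with
  | O => (1, z)
  | S m => let p := Wpair a b c d m z in
           (snd p, (a * z + b) * snd p + (c * z + d) * fst p)
  end.

Definition W (a b c d : R) (n : nat) (z : R) : R := fst (Wpair a b c d n z).

Definition Apol (a b z : R) : R := a * z + b.
Definition Bpol (c d z : R) : R := c * z + d.

Definition DeltaD (a b c d : R) : R := - a ^ 2 * d + a * b * c + c ^ 2.
Definition xDp (a b c d : R) : R :=
  (- a * b - 2 * c + 2 * sqrt (DeltaD a b c d)) / a ^ 2.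
Definition xDm (a b c d : R) : R :=
  (- a * b - 2 * c - 2 * sqrt (DeltaD a b c d)) / a ^ 2.

Definition Deltag (a b c d : R) : R := (b + c) ^ 2 + 4 * d * (1 - a).
Definition xgp (a b c d : R) : R := (b + c + sqrt (Deltag a b c d)) / (2 * (1 - a)).
Definition xgm (a b c d : R) : R := (b + c - sqrt (Deltag a b c d)) / (2 * (1 - a)).

Definition cp (a b d : R) : R := 2 * sqrt (d * (a - 1)) - b.
Definition cm (a b d : R) : R := - 2 * sqrt (d * (a - 1)) - b.

Definition xA (a b : R) : R := - b / a.
Definition xB (c d : R) : R := - d / c.
Definition hpol (a b z : R) : R := (2 - a) * z - b.
Definition nplus (a b c d : R) : R :=
  - Apol a b (xDp a b c d) / hpol a b (xDp a b c d).

Definition ceil_half (n : nat) : nat := Nat.div (n + 1) 2.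

(* For fixed z, W_n(z) solves a linear recurrence with characteristic polynomial
   t^2 - A(z) t - B(z).  Its discriminant q(z) = A(z)^2 + 4 B(z) factors as
   a^2 (z - x_Delta^-) (z - x_Delta^+), and its value at t = z is g(z).  At each
   special point the recurrence degenerates: at x_A it only involves B, at x_B only A,
   at x_Delta^+- it has the double root A/2, and at x_g^+- the number z itself is a
   root, so W_n = z^n.  The orderings of the points come from the signs of q and g at
   x_A, x_B, at the zero b/(2-a) of h and at the zero b/(4-a) of A + 2h, using
   4 g = h^2 - q, and from g > 0 at x_A (and at x_B when c >= c^+), points that lie
   left of the vertex of g. *)

From Stdlib Require Import Reals Lra Lia Psatz.
Open Scope R_scope.

Definition char_disc (a b c d z : R) : R := Apol a b z ^ 2 + 4 * Bpol c d z.

(* The paper's g: g z = z^2 - A z - B z is the characteristic polynomial at t = z. *)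
Definition gpol (a b c d z : R) : R := (1 - a) * z ^ 2 - (b + c) * z - d.

Lemma quadratic_factor (k l m s r1 r2 x : R) :
  k <> 0 -> s ^ 2 = l ^ 2 - 4 * k * m ->
  2 * k * r1 = - l - s -> 2 * k * r2 = - l + s ->
  k * x ^ 2 + l * x + m = k * (x - r1) * (x - r2).
Proof.
  intros Hk Hs H1 H2.
  apply (Rmult_eq_reg_l (4 * k)); [|intro; apply Hk; lra].
  replace (4 * k * (k * (x - r1) * (x - r2)))
    with ((2 * k * x - 2 * k * r1) * (2 * k * x - 2 * k * r2)) by ring.
  rewrite H1, H2.
  replace ((2 * k * x - (- l - s)) * (2 * k * x - (- l + s)))
    with ((2 * k * x + l) ^ 2 - s ^ 2) by ring.
  rewrite Hs. ring.
Qed.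

Lemma char_disc_factor (a b c d z : R) : a <> 0 -> 0 <= DeltaD a b c d ->
  char_disc a b c d z = a ^ 2 * (z - xDm a b c d) * (z - xDp a b c d).
Proof.
  intros Ha HD.
  assert (Ha2 : a ^ 2 <> 0) by (apply pow_nonzero; exact Ha).
  transitivity (a ^ 2 * z ^ 2 + (2 * a * b + 4 * c) * z + (b ^ 2 + 4 * d)).
  { unfold char_disc, Apol, Bpol. ring. }
  apply quadratic_factor with (s := 4 * sqrt (DeltaD a b c d)); auto.
  - replace ((4 * sqrt (DeltaD a b c d)) ^ 2) with (16 * sqrt (DeltaD a b c d) ^ 2) by ring.
    rewrite pow2_sqrt by exact HD. unfold DeltaD. ring.
  - unfold xDm. field. exact Ha.
  - unfold xDp. field. exact Ha.
Qed.

Lemma gpol_factor (a b c d z : R) : a <> 1 -> 0 <= Deltag a b c d ->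
  gpol a b c d z = (1 - a) * (z - xgm a b c d) * (z - xgp a b c d).
Proof.
  intros Ha HD.
  assert (Ha1 : 1 - a <> 0) by lra.
  transitivity ((1 - a) * z ^ 2 + (- (b + c)) * z + - d).
  { unfold gpol. ring. }
  apply quadratic_factor with (s := sqrt (Deltag a b c d)); auto.
  - rewrite pow2_sqrt by exact HD. unfold Deltag. ring.
  - unfold xgm. field. exact Ha1.
  - unfold xgp. field. exact Ha1.
Qed.

Lemma gpol_char_disc (a b c d z : R) :
  4 * gpol a b c d z = hpol a b z ^ 2 - char_disc a b c d z.
Proof. unfold gpol, hpol, char_disc, Apol, Bpol. ring. Qed.

Lemma xDm_le_xDp (a b c d : R) : a <> 0 -> xDm a b c d <= xDp a b c d.
Proof.
  intro Ha. pose proof (sqrt_pos (DeltaD a b c d)).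
  assert (Ha2 : 0 < a ^ 2) by (simpl; nra).
  unfold xDm, xDp, Rdiv. apply Rmult_le_compat_r; [|lra].
  apply Rlt_le, Rinv_0_lt_compat, Ha2.
Qed.

Lemma xgm_le_xgp (a b c d : R) : a < 1 -> xgm a b c d <= xgp a b c d.
Proof.
  intro Ha. pose proof (sqrt_pos (Deltag a b c d)).
  unfold xgm, xgp, Rdiv. apply Rmult_le_compat_r; [|lra].
  apply Rlt_le, Rinv_0_lt_compat. lra.
Qed.

Lemma Apol_xA (a b x : R) : a <> 0 -> Apol a b x = a * (x - xA a b).
Proof. intro Ha. unfold Apol, xA. field. exact Ha. Qed.

Lemma Bpol_xB (c d x : R) : c <> 0 -> Bpol c d x = c * (x - xB c d).
Proof. intro Hc. unfold Bpol, xB. field. exact Hc. Qed.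

Lemma W_0 (a b c d z : R) : W a b c d 0 z = 1.
Proof. reflexivity. Qed.

Lemma W_1 (a b c d z : R) : W a b c d 1 z = z.
Proof. reflexivity. Qed.

Lemma W_SS (a b c d : R) (n : nat) (z : R) :
  W a b c d (S (S n)) z = Apol a b z * W a b c d (S n) z + Bpol c d z * W a b c d n z.
Proof. reflexivity. Qed.

Lemma nat_ind2 (P : nat -> Prop) :
  P 0%nat -> P 1%nat -> (forall n, P n -> P (S n) -> P (S (S n))) -> forall n, P n.
Proof.
  intros H0 H1 HS n. enough (P n /\ P (S n)) by tauto.
  induction n as [|n [IH IH']]; auto.
Qed.

Lemma W_gpol_root (a b c d z : R) (n : nat) : gpol a b c d z = 0 -> W a b c d n z = z ^ n.
Proof.
  intro Hg. induction n as [| |n IH IH'] using nat_ind2.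
  - reflexivity.
  - rewrite W_1. ring.
  - rewrite W_SS, IH, IH'.
    replace (z ^ S (S n)) with (z ^ n * (z ^ 2 - gpol a b c d z)) by (rewrite Hg; simpl; ring).
    unfold gpol, Apol, Bpol. simpl. ring.
Qed.

Lemma W_double_root (a b c d z : R) (n : nat) : char_disc a b c d z = 0 ->
  W a b c d (S n) z = (Apol a b z / 2) ^ n * (Apol a b z + INR (S n) * hpol a b z) / 2.
Proof.
  intro Hq.
  assert (HB : Bpol c d z = - (Apol a b z / 2) ^ 2).
  { unfold char_disc in Hq. nra. }
  induction n as [| |n IH IH'] using nat_ind2.
  - rewrite W_1. unfold hpol, Apol. simpl. field.
  - rewrite W_SS, W_1, W_0, HB. unfold hpol, Apol. simpl. field.
  - rewrite W_SS, IH', IH, HB. rewrite !S_INR. simpl. field.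
Qed.

Lemma ceil_half_SS (n : nat) : ceil_half (S (S n)) = S (ceil_half n).
Proof.
  unfold ceil_half. replace (S (S n) + 1)%nat with (n + 1 + 1 * 2)%nat by lia.
  rewrite Nat.div_add by lia. lia.
Qed.

Lemma W_Apol_root (a b c d z : R) (n : nat) :
  Apol a b z = 0 -> Bpol c d z < 0 -> z < 0 -> (1 <= n)%nat ->
  0 < (-1) ^ ceil_half n * W a b c d n z.
Proof.
  intros HA HB Hz Hn. destruct n as [|n]; [lia|clear Hn].
  induction n as [| |n IH _] using nat_ind2.
  - rewrite W_1. simpl. lra.
  - rewrite W_SS, W_1, W_0, HA. simpl. lra.
  - rewrite W_SS, HA, ceil_half_SS. simpl.
    replace (-1 * (-1) ^ ceil_half (S n)
             * (0 * W a b c d (S (S n)) z + Bpol c d z * W a b c d (S n) z))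
      with (- Bpol c d z * ((-1) ^ ceil_half (S n) * W a b c d (S n) z)) by ring.
    apply Rmult_lt_0_compat; lra.
Qed.

Lemma W_Bpol_root (a b c d z : R) (n : nat) :
  Bpol c d z = 0 -> Apol a b z < 0 -> 0 < z -> (1 <= n)%nat ->
  (-1) ^ n * W a b c d n z < 0.
Proof.
  intros HB HA Hz Hn. destruct n as [|n]; [lia|clear Hn].
  induction n as [|n IH].
  - rewrite W_1. simpl. lra.
  - rewrite W_SS, HB.
    replace ((-1) ^ S (S n) * (Apol a b z * W a b c d (S n) z + 0 * W a b c d n z))
      with (- Apol a b z * ((-1) ^ S n * W a b c d (S n) z)) by (simpl; ring).
    nra.
Qed.

Section Signs.

Variables a b c d : R.
Hypotheses (ha : a < 0) (hb : b < 0) (hd : d < 0) (hc : 0 < c).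

Lemma DeltaD_pos : 0 < DeltaD a b c d.
Proof.
  unfold DeltaD.
  assert (0 < a * a * - d) by (apply Rmult_lt_0_compat; nra).
  assert (0 < a * b * c) by (apply Rmult_lt_0_compat; nra).
  simpl. nra.
Qed.

Lemma char_disc_scaled (y : R) :
  char_disc a b c d y = a ^ 2 * ((y - xDm a b c d) * (y - xDp a b c d)).
Proof.
  rewrite char_disc_factor by (lra || apply Rlt_le, DeltaD_pos). ring.
Qed.

Lemma char_disc_neg_iff (y : R) :
  char_disc a b c d y < 0 <-> xDm a b c d < y < xDp a b c d.
Proof.
  rewrite char_disc_scaled. pose proof (xDm_le_xDp a b c d ltac:(lra)).
  assert (0 < a ^ 2) by (simpl; nra).
  split; intro Hy; assert ((y - xDm a b c d) * (y - xDp a b c d) < 0) by nra; nra.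
Qed.

Lemma char_disc_pos_iff (y : R) :
  0 < char_disc a b c d y <-> y < xDm a b c d \/ xDp a b c d < y.
Proof.
  rewrite char_disc_scaled. pose proof (xDm_le_xDp a b c d ltac:(lra)).
  assert (0 < a ^ 2) by (simpl; nra).
  split; intro Hy.
  - assert (0 < (y - xDm a b c d) * (y - xDp a b c d)) by nra.
    destruct (Rlt_or_le y (xDm a b c d)); [left; lra|right; nra].
  - assert (0 < (y - xDm a b c d) * (y - xDp a b c d)) by (destruct Hy; nra). nra.
Qed.

Lemma xA_neg : xA a b < 0.
Proof. pose proof (Apol_xA a b 0 ltac:(lra)). unfold Apol in *. nra. Qed.

Lemma xB_pos : 0 < xB c d.
Proof. pose proof (Bpol_xB c d 0 ltac:(lra)). unfold Bpol in *. nra. Qed.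

Lemma Bpol_xA_neg : Bpol c d (xA a b) < 0.
Proof. pose proof xA_neg. unfold Bpol. nra. Qed.

Lemma Apol_xB_neg : Apol a b (xB c d) < 0.
Proof. pose proof xB_pos. unfold Apol. nra. Qed.

Lemma xA_between : xDm a b c d < xA a b < xDp a b c d.
Proof.
  apply char_disc_neg_iff. unfold char_disc.
  rewrite Apol_xA by lra. pose proof Bpol_xA_neg. simpl. nra.
Qed.

Lemma xDp_lt_xB : xDp a b c d < xB c d.
Proof.
  pose proof xA_between. pose proof xA_neg. pose proof xB_pos.
  assert (Hq : 0 < char_disc a b c d (xB c d)).
  { pose proof Apol_xB_neg. unfold char_disc. rewrite (Bpol_xB c d) by lra. simpl. nra. }
  apply char_disc_pos_iff in Hq. lra.
Qed.

Lemma Apol_xDm_pos : 0 < Apol a b (xDm a b c d).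
Proof. rewrite Apol_xA by lra. pose proof xA_between. nra. Qed.

Lemma Apol_xDp_neg : Apol a b (xDp a b c d) < 0.
Proof. rewrite Apol_xA by lra. pose proof xA_between. nra. Qed.

Lemma char_disc_xDm : char_disc a b c d (xDm a b c d) = 0.
Proof. rewrite char_disc_scaled. ring. Qed.

Lemma char_disc_xDp : char_disc a b c d (xDp a b c d) = 0.
Proof. rewrite char_disc_scaled. ring. Qed.

Lemma W_xDm_neg (n : nat) : (1 <= n)%nat -> W a b c d n (xDm a b c d) < 0.
Proof.
  intro Hn. destruct n as [|n]; [lia|clear Hn].
  rewrite W_double_root by exact char_disc_xDm.
  pose proof Apol_xDm_pos. pose proof xA_between. pose proof xA_neg.
  assert (Hh : hpol a b (xDm a b c d) < 0) by (unfold hpol, Apol in *; nra).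
  assert (0 < (Apol a b (xDm a b c d) / 2) ^ n) by (apply pow_lt; lra).
  assert (1 <= INR (S n)) by (rewrite S_INR; pose proof (pos_INR n); lra).
  assert (Apol a b (xDm a b c d) + INR (S n) * hpol a b (xDm a b c d) < 0)
    by (unfold hpol, Apol in *; nra).
  nra.
Qed.

Lemma signed_W_xDp (n : nat) :
  (-1) ^ S n * W a b c d (S n) (xDp a b c d) =
  (- Apol a b (xDp a b c d) / 2) ^ n
  * (- (Apol a b (xDp a b c d) + INR (S n) * hpol a b (xDp a b c d)) / 2).
Proof.
  rewrite W_double_root by exact char_disc_xDp.
  replace (- Apol a b (xDp a b c d) / 2) with (-1 * (Apol a b (xDp a b c d) / 2)) by field.
  rewrite Rpow_mult_distr. simpl. field.
Qed.

Lemma hpol_xDp_pos_iff : 0 < hpol a b (xDp a b c d) <-> Deltag a b c d < DeltaD a b c d.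
Proof.
  set (z0 := b / (2 - a)).
  assert (Hh : hpol a b (xDp a b c d) = (2 - a) * (xDp a b c d - z0))
    by (unfold hpol, z0; field; lra).
  assert (Hq : (2 - a) ^ 2 * char_disc a b c d z0 = 4 * (Deltag a b c d - DeltaD a b c d))
    by (unfold char_disc, Apol, Bpol, Deltag, DeltaD, z0; field; lra).
  assert (Hz0 : xDm a b c d < z0).
  { pose proof xA_between. enough (xA a b < z0) by lra.
    assert (Hk : (xA a b - z0) * (a * (2 - a)) = - 2 * b) by (unfold xA, z0; field; lra).
    assert (a * (2 - a) < 0) by nra. nra. }
  assert (0 < (2 - a) ^ 2) by (simpl; nra).
  rewrite Hh. split; intro Hpos.
  - assert (char_disc a b c d z0 < 0) by (apply char_disc_neg_iff; split; nra). nra.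
  - assert (Hneg : char_disc a b c d z0 < 0) by nra.
    apply char_disc_neg_iff in Hneg. nra.
Qed.

Lemma signed_W_xDp_cases (n : nat) : (1 <= n)%nat ->
  ((DeltaD a b c d > Deltag a b c d /\ INR n > nplus a b c d) ->
     (-1) ^ n * W a b c d n (xDp a b c d) < 0) /\
  ((DeltaD a b c d > Deltag a b c d /\ INR n = nplus a b c d) ->
     (-1) ^ n * W a b c d n (xDp a b c d) = 0) /\
  (~ (DeltaD a b c d > Deltag a b c d /\ INR n >= nplus a b c d) ->
     (-1) ^ n * W a b c d n (xDp a b c d) > 0).
Proof.
  intro Hn. destruct n as [|n]; [lia|clear Hn]. rewrite signed_W_xDp.
  assert (Hnplus : 0 < hpol a b (xDp a b c d) ->
            nplus a b c d * hpol a b (xDp a b c d) = - Apol a b (xDp a b c d))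
    by (intro; unfold nplus; field; lra).
  pose proof Apol_xDp_neg as HA.
  pose proof hpol_xDp_pos_iff as Hh.
  set (A := Apol a b (xDp a b c d)) in *. set (h := hpol a b (xDp a b c d)) in *.
  set (N := INR (S n)). set (np := nplus a b c d) in *.
  assert (HP : 0 < (- A / 2) ^ n) by (apply pow_lt; lra).
  assert (HN : 1 <= N) by (unfold N; rewrite S_INR; pose proof (pos_INR n); lra).
  split; [|split].
  - intros [HD Hgt]. apply Hh in HD. specialize (Hnplus HD).
    assert (0 < A + N * h) by nra. nra.
  - intros [HD Heq]. apply Hh in HD. specialize (Hnplus HD).
    replace (A + N * h) with 0 by (rewrite Heq; lra). lra.
  - intro Hnot. assert (A + N * h < 0); [|nra].
    destruct (Rlt_or_le (Deltag a b c d) (DeltaD a b c d)) as [HD|HD].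
    + assert (N < np) by (apply Rnot_ge_lt; tauto).
      apply Hh in HD. specialize (Hnplus HD). nra.
    + assert (h <= 0) by (apply Rnot_lt_le; intro Hpos; apply Hh in Hpos; lra). nra.
Qed.

Lemma lt_xgm (y : R) : 0 <= Deltag a b c d ->
  2 * (1 - a) * y < b + c -> 0 < gpol a b c d y -> y < xgm a b c d.
Proof.
  intros HD Hy Hg. rewrite gpol_factor in Hg by lra.
  assert (y < xgp a b c d).
  { pose proof (sqrt_pos (Deltag a b c d)).
    assert (2 * (1 - a) * xgp a b c d = b + c + sqrt (Deltag a b c d))
      by (unfold xgp; field; lra).
    nra. }
  assert (0 < (y - xgm a b c d) * (y - xgp a b c d)) by nra. nra.
Qed.

Lemma gpol_root_xgm : 0 <= Deltag a b c d -> gpol a b c d (xgm a b c d) = 0.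
Proof. intro HD. rewrite gpol_factor by lra. ring. Qed.

Lemma gpol_root_xgp : 0 <= Deltag a b c d -> gpol a b c d (xgp a b c d) = 0.
Proof. intro HD. rewrite gpol_factor by lra. ring. Qed.

Lemma xA_lt_xgm : 0 <= Deltag a b c d -> xA a b < xgm a b c d.
Proof.
  intro HD. pose proof xA_neg. pose proof (Apol_xA a b (xA a b) ltac:(lra)).
  apply lt_xgm; [exact HD| |]; unfold gpol, Apol in *; nra.
Qed.

Lemma xDp_le_xgm : 0 <= Deltag a b c d -> xDp a b c d <= xgm a b c d.
Proof.
  intro HD. apply Rnot_lt_le. intro Hlt.
  assert (Hq : char_disc a b c d (xgm a b c d) < 0).
  { apply char_disc_neg_iff. pose proof xA_between. pose proof (xA_lt_xgm HD). lra. }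
  pose proof (gpol_char_disc a b c d (xgm a b c d)) as Hg.
  rewrite gpol_root_xgm in Hg by exact HD.
  pose proof (pow2_ge_0 (hpol a b (xgm a b c d))). lra.
Qed.

Lemma sqrt_d_a_spec : 0 < sqrt (d * (a - 1)) /\ sqrt (d * (a - 1)) ^ 2 = d * (a - 1).
Proof. split; [apply sqrt_lt_R0; nra | apply pow2_sqrt; nra]. Qed.

Lemma Deltag_nonneg : c <= cm a b d \/ cp a b d <= c -> 0 <= Deltag a b c d.
Proof.
  unfold cm, cp, Deltag. destruct sqrt_d_a_spec as [Hr Hr2].
  set (r := sqrt (d * (a - 1))) in *.
  intro Hc; assert (4 * r ^ 2 <= (b + c) ^ 2) by (destruct Hc; nra). nra.
Qed.

Lemma xgp_neg : c <= cm a b d -> xgp a b c d < 0.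
Proof.
  intro Hcm. pose proof (Deltag_nonneg (or_introl Hcm)) as HD.
  unfold cm in Hcm. destruct sqrt_d_a_spec as [Hr Hr2].
  pose proof (sqrt_pos (Deltag a b c d)) as Hs. pose proof (pow2_sqrt _ HD) as Hs2.
  assert (Hlt : sqrt (Deltag a b c d) ^ 2 < (b + c) ^ 2) by (rewrite Hs2; unfold Deltag; nra).
  assert (sqrt (Deltag a b c d) < - (b + c)) by nra.
  assert (2 * (1 - a) * xgp a b c d = b + c + sqrt (Deltag a b c d)) by (unfold xgp; field; lra).
  nra.
Qed.

Lemma xB_lt_xgm : cp a b d <= c -> xB c d < xgm a b c d.
Proof.
  intro Hcp. pose proof (Deltag_nonneg (or_intror Hcp)) as HD.
  pose proof xB_pos. pose proof (Bpol_xB c d (xB c d) ltac:(lra)).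
  apply lt_xgm; [exact HD| |].
  - unfold cp in Hcp. destruct sqrt_d_a_spec as [Hr Hr2].
    assert (Hcx : c * xB c d = - d) by (unfold xB; field; lra).
    assert (2 * (1 - a) * (c * xB c d) < c * (b + c)) by nra. nra.
  - pose proof Apol_xB_neg. unfold gpol, Apol, Bpol in *. nra.
Qed.

Lemma Apol_2hpol_xDp_pos : cp a b d <= c ->
  0 < Apol a b (xDp a b c d) + 2 * hpol a b (xDp a b c d).
Proof.
  intro Hcp. set (y := b / (4 - a)).
  assert (Hy : Apol a b (xDp a b c d) + 2 * hpol a b (xDp a b c d) = (4 - a) * (xDp a b c d - y))
    by (unfold Apol, hpol, y; field; lra).
  assert (Hq : (4 - a) ^ 2 * char_disc a b c d y
               = 4 * (d * (4 - a) ^ 2 + b * (c * (4 - a) + 4 * b)))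
    by (unfold char_disc, Apol, Bpol, y; field; lra).
  assert (Hneg : char_disc a b c d y < 0).
  { unfold cp in Hcp. destruct sqrt_d_a_spec as [Hr _].
    assert (0 < c * (4 - a) + 4 * b) by nra.
    assert (0 < (4 - a) ^ 2) by (simpl; nra).
    assert (d * (4 - a) ^ 2 < 0) by nra. nra. }
  apply char_disc_neg_iff in Hneg. nra.
Qed.

Lemma signed_W_xDp_neg (n : nat) : cp a b d <= c -> (2 <= n)%nat ->
  (-1) ^ n * W a b c d n (xDp a b c d) < 0.
Proof.
  intros Hcp Hn. destruct n as [|n]; [lia|]. rewrite signed_W_xDp.
  pose proof (Apol_2hpol_xDp_pos Hcp) as H2. pose proof Apol_xDp_neg as HA.
  set (A := Apol a b (xDp a b c d)) in *. set (h := hpol a b (xDp a b c d)) in *.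
  assert (HP : 0 < (- A / 2) ^ n) by (apply pow_lt; lra).
  assert (HN : 2 <= INR (S n)) by (change 2 with (INR 2); apply le_INR; lia).
  assert (0 < A + INR (S n) * h) by nra. nra.
Qed.

End Signs.

Theorem lemma4p1 (a b c d : R) (ha : a < 0) (hb : b < 0) (hd : d < 0) (hc : 0 < c) :
  (xDm a b c d < xA a b /\ xA a b < 0 /\ 0 < xB c d) /\
  (xA a b < xDp a b c d /\ xDp a b c d < xB c d) /\
  (Apol a b (xDm a b c d) > 0 /\ 0 > Apol a b (xDp a b c d)) /\
  (forall n : nat, (1 <= n)%nat ->
     (-1) ^ ceil_half n * W a b c d n (xA a b) > 0 /\
     (-1) ^ n * W a b c d n (xB c d) < 0 /\
     W a b c d n (xDm a b c d) < 0) /\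
  (c <= cm a b d ->
     (xDp a b c d <= xgm a b c d /\ xgm a b c d <= xgp a b c d /\ xgp a b c d < 0) /\
     (forall n : nat, (1 <= n)%nat ->
        (-1) ^ n * W a b c d n (xgp a b c d) > 0 /\
        (-1) ^ n * W a b c d n (xgm a b c d) > 0) /\
     (forall n : nat, (1 <= n)%nat ->
        ((DeltaD a b c d > Deltag a b c d /\ INR n > nplus a b c d) ->
           (-1) ^ n * W a b c d n (xDp a b c d) < 0) /\
        ((DeltaD a b c d > Deltag a b c d /\ INR n = nplus a b c d) ->
           (-1) ^ n * W a b c d n (xDp a b c d) = 0) /\
        (~ (DeltaD a b c d > Deltag a b c d /\ INR n >= nplus a b c d) ->
           (-1) ^ n * W a b c d n (xDp a b c d) > 0))) /\
  (c >= cp a b d ->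
     xB c d < xgm a b c d /\
     (forall n : nat, (1 <= n)%nat ->
        W a b c d n (xgp a b c d) > 0 /\ W a b c d n (xgm a b c d) > 0) /\
     (forall n : nat, (2 <= n)%nat ->
        (-1) ^ n * W a b c d n (xDp a b c d) < 0)).
Proof.
  assert (HxA : xDm a b c d < xA a b < xDp a b c d) by (apply xA_between; assumption).
  split; [split; [apply HxA | split; [apply xA_neg | apply xB_pos]]; assumption|].
  split; [split; [apply HxA | apply xDp_lt_xB]; assumption|].
  split; [split; [apply Apol_xDm_pos | apply Apol_xDp_neg]; assumption|].
  split.
  { intros n Hn. split; [|split].
    - apply W_Apol_root; [rewrite Apol_xA by lra; ring | apply Bpol_xA_neg | apply xA_neg |];
        assumption.
    - apply W_Bpol_root; [rewrite Bpol_xB by lra; ring | apply Apol_xB_neg | apply xB_pos |];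
        assumption.
    - apply W_xDm_neg; assumption. }
  split.
  - intro Hcm.
    assert (HDg : 0 <= Deltag a b c d) by (apply Deltag_nonneg; auto).
    assert (Hgp : xgp a b c d < 0) by (apply xgp_neg; assumption).
    assert (Hg : xgm a b c d <= xgp a b c d) by (apply xgm_le_xgp; lra).
    split; [split; [apply xDp_le_xgm; assumption | split; assumption] | split].
    + intros n _.
      rewrite (W_gpol_root _ _ _ _ (xgp a b c d)), (W_gpol_root _ _ _ _ (xgm a b c d))
        by (apply gpol_root_xgp || apply gpol_root_xgm; assumption).
      rewrite <- !Rpow_mult_distr. split; apply pow_lt; lra.
    + intros n Hn. apply signed_W_xDp_cases; assumption.
  - intro Hcp. apply Rge_le in Hcp.
    assert (HDg : 0 <= Deltag a b c d) by (apply Deltag_nonneg; auto).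
    assert (HxB : xB c d < xgm a b c d) by (apply xB_lt_xgm; assumption).
    assert (Hg : xgm a b c d <= xgp a b c d) by (apply xgm_le_xgp; lra).
    assert (0 < xB c d) by (apply xB_pos; assumption).
    split; [exact HxB | split].
    + intros n _.
      rewrite (W_gpol_root _ _ _ _ (xgp a b c d)), (W_gpol_root _ _ _ _ (xgm a b c d))
        by (apply gpol_root_xgp || apply gpol_root_xgm; assumption).
      split; apply pow_lt; lra.
    + intros n Hn. apply signed_W_xDp_neg; assumption.
Qed.
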